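(* Let $t\ge 1$ be an integer and $n=2t^2+2t+1$. Let $\mathcal{C}_0\subseteq\mathbb{Z}_n^2$ be a linear $t$-error-correcting perfect code with generator matrix $G=[a~~b]$, and let $\mathcal{C}=\mathbf{x}+\mathcal{C}_0$ for some $\mathbf{x}=(x_1,x_2)\in\mathbb{Z}_n^2$. Let $\mathcal{S}$ be the set of all perfect Sudoku grids with respect to $\mathcal{C}$, and let \[ \mathcal{G}_\mathcal{S}=\langle \tau_2^{x_1+x_2+1}\tau_1^{x_1-x_2}r,\ \tau_1^a\tau_2^b\rangle. \] Then for every $S\in\mathcal{S}$ and every $g\in\mathcal{G}_\mathcal{S}$, we have $g\cdot S\in\mathcal{S}$.
   Context: $\mathbb{Z}_n$ is the integers modulo $n$; Lee weight of $\mathbf{u}\in\mathbb{Z}_n^2$ is $\sum_i\min\{u_i,n-u_i\}$ and Lee distance $d_L(\mathbf{u},\mathbf{v})=\mathrm{wt}_L(\mathbf{u}-\mathbf{v})$. A linear code is a submodule of $\mathbb{Z}_n^2$; a generator matrix is a matrix whose rows form a minimal spanning set. A code with minimum Lee distance $d$ is a perfect code if, with $t=\lfloor (d-1)/2\rfloor$, the Lee balls $\mathcal{B}_t(\mathbf{c})$ of radius $t$ around the codewords cover $\mathbb{Z}_n^2$ (they are then pairwise disjoint); it is $t$-error-correcting if $d\ge 2t+1$. For $n=2t^2+2t+1$, each ball of radius $t$ in $\mathbb{Z}_n^2$ has $n$ points, so such a perfect code has $n$ codewords. A palette grid is an $n\times n$ array with entries in $[n]=\{1,\dots,n\}$ in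 which each symbol occurs exactly $n$ times. Two $n\times n$ arrays with entries in an $n$-set are orthogonal if the $n^2$ ordered pairs of corresponding entries are all distinct. A Sudoku grid with respect to a palette grid $\mathcal{I}$ is a Latin square of order $n$ on $[n]$ orthogonal to $\mathcal{I}$. For a $t$-error-correcting perfect code $\mathcal{C}=\{\mathbf{c}_1,\dots,\mathbf{c}_n\}\subseteq\mathbb{Z}_n^2$, the palette grid $\mathcal{I}_\mathcal{C}$ has rows and columns indexed by $\mathbb{Z}_n$ and entry $i$ at every position $(x,y)\in\mathcal{B}_t(\mathbf{c}_i)$ ($x$ = row, $y$ = column); a perfect Sudoku grid with respect to $\mathcal{C}$ is a Sudoku grid with respect to $\mathcal{I}_\mathcal{C}$. Maps on $n\times n$ arrays $A$ (indices in $\mathbb{Z}_n$): $(r(A))_{i,j}=A_{n-1-j,i}$ (rotation), $(\tau_1(A))_{i,j}=A_{i-1,j}$, $(\tau_2(A))_{i,j}=A_{i,j-1}$ (translations); the group they generate acts on arrays by $\varphi\cdot A=\varphi(A)$ with composition of maps. *)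

From HB Require Import structures.
From mathcomp Require Import all_boot all_order all_algebra all_fingroup.
From mathcomp Require Import ring.
Set Implicit Arguments. Unset Strict Implicit. Unset Printing Implicit Defensive.
Import GRing.Theory.
Local Open Scope ring_scope.

(* Points of Z_n^2: first component = row x, second = column y. *)
Definition point (n : nat) := ('Z_n * 'Z_n)%type.

Definition leeZ (n : nat) (u : 'Z_n) : nat := minn (val u) (n - val u).
Arguments leeZ : clear implicits.
Definition leeW (n : nat) (u : point n) : nat := (leeZ n u.1 + leeZ n u.2)%N.
Arguments leeW : clear implicits.
Definition leeD (n : nat) (u v : point n) : nat := leeW n (u.1 - v.1, u.2 - v.2).

Arguments leeD : clear implicits.

Definition ball (n t : nat) (c : point n) : {set point n} :=
  [set p | (leeD n p c <= t)%N].

Arguments ball : clear implicits.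

Definition linear_code (n : nat) (C : {set point n}) : Prop :=
  [/\ (0, 0) \in C,
      forall u v, u \in C -> v \in C -> (u.1 + v.1, u.2 + v.2) \in C
    & forall (k : 'Z_n) u, u \in C -> (k * u.1, k * u.2) \in C].

(* The 1x2 matrix [a b] is a generator matrix of C: its single row spans C
   and this spanning set is minimal (the row is nonzero). *)
Definition gen_row (n : nat) (C : {set point n}) (a b : 'Z_n) : Prop :=
  C = [set (k * a, k * b) | k : 'Z_n] /\ ((a != 0) || (b != 0)).

Definition min_lee_dist (n : nat) (C : {set point n}) (d : nat) : Prop :=
  (exists c1 c2, [/\ c1 \in C, c2 \in C, c1 != c2 & leeD n c1 c2 = d])
  /\ (forall c1 c2, c1 \in C -> c2 \in C -> c1 != c2 -> (d <= leeD n c1 c2)%N).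

Definition t_perfect_code (n : nat) (C : {set point n}) (t : nat) : Prop :=
  exists d : nat, [/\ min_lee_dist C d, (2 * t + 1 <= d)%N, (d.-1)./2 = t
                   & forall p : point n, exists2 c, c \in C & p \in ball n t c].

Definition transl (n : nat) (x : point n) (C : {set point n}) : {set point n} :=
  [set (x.1 + c.1, x.2 + c.2) | c in C].

(* n x n arrays with entries in an n-set (symbols [n] relabelled as 'I_n). *)
Definition grid (n : nat) := {ffun point n -> 'I_n}.

(* Latin square: each symbol occurs exactly once in each row and column
   (injectivity of each row/column map between n-element sets). *)
Definition latin (n : nat) (L : grid n) : Prop :=
  (forall i : 'Z_n, injective (fun j : 'Z_n => L (i, j))) /\
  (forall j : 'Z_n, injective (fun i : 'Z_n => L (i, j))).

Definition orthogonal (n : nat) (A B : Type) (X : point n -> A) (Y : point n -> B) :=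
  injective (fun p => (X p, Y p)).

(* Palette grid of a code: the entry at p is the (label of the) codeword
   whose radius-t ball contains p; codewords themselves serve as symbols. *)
Definition palette (n t : nat) (C : {set point n}) (p : point n) : option (point n) :=
  [pick c in C | p \in ball n t c].

Definition perfect_sudoku (n t : nat) (C : {set point n}) (S : grid n) : Prop :=
  latin S /\ orthogonal (fun p => S p) (palette t C).

Definition rotF (n : nat) (A : grid n) : grid n := [ffun p => A (-1 - p.2, p.1)].
Definition rotI (n : nat) (A : grid n) : grid n := [ffun p => A (p.2, -1 - p.1)].
Definition tau1F (n : nat) (A : grid n) : grid n := [ffun p => A (p.1 - 1, p.2)].
Definition tau1I (n : nat) (A : grid n) : grid n := [ffun p => A (p.1 + 1, p.2)].
Definition tau2F (n : nat) (A : grid n) : grid n := [ffun p => A (p.1, p.2 - 1)].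
Definition tau2I (n : nat) (A : grid n) : grid n := [ffun p => A (p.1, p.2 + 1)].

Lemma rotK n : cancel (@rotF n) (@rotI n).
Proof.
move=> A; apply/ffunP => -[i j]; rewrite !ffunE /=; congr (A (_, _)).
by rewrite opprB addrC subrK.
Qed.
Lemma tau1K n : cancel (@tau1F n) (@tau1I n).
Proof. by move=> A; apply/ffunP => -[i j]; rewrite !ffunE /= addrK. Qed.
Lemma tau2K n : cancel (@tau2F n) (@tau2I n).
Proof. by move=> A; apply/ffunP => -[i j]; rewrite !ffunE /= addrK. Qed.

Definition rP (n : nat) : {perm grid n} := perm (can_inj (@rotK n)).
Definition tau1P (n : nat) : {perm grid n} := perm (can_inj (@tau1K n)).
Definition tau2P (n : nat) : {perm grid n} := perm (can_inj (@tau2K n)).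

(* G_S = < tau2^(x1+x2+1) tau1^(x1-x2) r , tau1^a tau2^b >, where maps are
   composed as functions (rightmost applied first).  In MathComp's
   permutation group, (p * q) x = q (p x), so the map
   tau2^k o tau1^m o r is the permutation r * tau1^m * tau2^k. *)
Definition GS (n : nat) (x : point n) (a b : 'Z_n) : {set {perm grid n}} :=
  <<[set (rP n * tau1P n ^+ val (x.1 - x.2) * tau2P n ^+ val (x.1 + x.2 + 1))%g;
         (tau1P n ^+ val a * tau2P n ^+ val b)%g]>>%g.

(* Each generator acts on grids by precomposition with a bijection phi of
   Z_n^2 that maps rows and columns to rows or columns, preserves the Lee
   distance and maps the code C = x + C0 onto itself.  Such a phi keeps Latin
   squares Latin and, since the palette of a perfect code names the unique
   codeword within distance t, it also keeps orthogonality to the palette.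
   For tau1^a tau2^b, phi is the translation by -(a, b), a codeword of C0.
   For the other generator, phi (x + c) = x + (-c2, c1), so C0 must be closed
   under rotation: the codewords covering (t, 1) and (t, -1) are 2t + 1 apart,
   which forces w = (t, +-(t + 1)) into C0; w spans C0 as |C0| <= n, and since
   2t^2 + 2t + 1 = 0 in Z_n the rotation of w is +-(2t + 1) w. *)

From Pilot Require Import Defs.
From mathcomp Require Import all_boot all_order all_algebra all_fingroup.
From mathcomp Require Import ring zify.
Set Implicit Arguments. Unset Strict Implicit. Unset Printing Implicit Defensive.
Import GRing.Theory.
Local Open Scope ring_scope.

Section LeeMetric.
Variable n : nat.
Hypothesis n_gt1 : (1 < n)%N.

Lemma Zn_val_lt (z : 'Z_n) : (val z < n)%N.
Proof. by rewrite -[X in (_ < X)%N](Zp_cast n_gt1) ltn_ord. Qed.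

Lemma Zn_val_natr k : val (k%:R : 'Z_n) = (k %% n)%N.
Proof. exact: val_Zp_nat. Qed.

Lemma Zn_natr_val (z : 'Z_n) : (val z)%:R = z.
Proof. by apply: val_inj; rewrite /= Zn_val_natr // modn_small // Zn_val_lt. Qed.

Lemma Zn_natr_subval (z : 'Z_n) : (n - val z)%:R = - z.
Proof. by rewrite natrB ?pchar_Zp ?sub0r ?Zn_natr_val // ltnW ?Zn_val_lt. Qed.

Lemma leeZN (z : 'Z_n) : leeZ n (- z) = leeZ n z.
Proof.
rewrite -Zn_natr_subval /leeZ Zn_val_natr //.
have := Zn_val_lt z; case: (posnP (val z)) => [-> | z_gt0 z_lt].
  by rewrite !(subn0, modnn).
by rewrite modn_small ?subKn 1?minnC //; lia.
Qed.

Lemma leeZ_intr (Z : int) : (leeZ n Z%:~R <= `|Z|)%N.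
Proof.
have leeZ_natr k : (leeZ n k%:R <= k)%N.
  by rewrite /leeZ Zn_val_natr // (leq_trans (geq_minl _ _)) ?leq_mod.
case: Z => k; first by rewrite -pmulrn leeZ_natr.
by rewrite NegzE mulrNz leeZN -pmulrn leeZ_natr.
Qed.

Lemma leeZ_attained (z : 'Z_n) : exists2 Z : int, z = Z%:~R & `|Z|%N = leeZ n z.
Proof.
have := Zn_val_lt z; rewrite /leeZ.
case: (leqP (val z) (n - val z)) => le_z z_lt.
  by exists (val z)%:Z; rewrite -?pmulrn ?Zn_natr_val //=; lia.
exists (- (n - val z)%:Z); first by rewrite mulrNz -pmulrn Zn_natr_subval opprK.
by rewrite abszN /=; lia.
Qed.

Lemma intr_Zn_eq0 (Z : int) : (Z%:~R : 'Z_n) = 0 -> (`|Z| < n)%N -> Z = 0.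
Proof.
case: Z => k; rewrite ?NegzE ?mulrNz -pmulrn.
  by move=> /(congr1 val); rewrite Zn_val_natr /= => + k_lt; rewrite modn_small // => ->.
move=> /eqP; rewrite oppr_eq0 => /eqP /(congr1 val).
by rewrite Zn_val_natr /= => + k_lt; rewrite modn_small.
Qed.

Lemma leeZD (y z : 'Z_n) : (leeZ n (y + z)%R <= leeZ n y + leeZ n z)%N.
Proof.
have [Y -> <-] := leeZ_attained y; have [Z -> <-] := leeZ_attained z.
by rewrite -intrD; have := leeZ_intr (Y + Z); lia.
Qed.

Lemma leeDC (p q : point n) : leeD n p q = leeD n q p.
Proof.
by rewrite /leeD /leeW /= -[leeZ n (p.1 - q.1)]leeZN -[leeZ n (p.2 - q.2)]leeZN !opprB.
Qed.

Lemma leeD_triangle (p q r : point n) : (leeD n p r <= leeD n p q + leeD n q r)%N.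
Proof.
rewrite /leeD /leeW /= addnACA.
by rewrite -[p.1 - r.1](subrKA q.1) -[p.2 - r.2](subrKA q.2) leq_add ?leeZD.
Qed.

Lemma leeD_transl (x p q : point n) :
  leeD n (x.1 + p.1, x.2 + p.2) (x.1 + q.1, x.2 + q.2) = leeD n p q.
Proof.
have addKB (u v w : 'Z_n) : u + v - (u + w) = v - w by ring.
by rewrite /leeD /leeW /= !addKB.
Qed.

End LeeMetric.

Definition lee_tiling n t (C : {set point n}) :=
  (forall p, exists2 c, c \in C & p \in ball n t c) /\
  {in C &, forall c c' p, p \in ball n t c -> p \in ball n t c' -> c = c'}.

Section Tiling.
Variables (n t : nat).
Hypothesis n_gt1 : (1 < n)%N.

Lemma ball_unique (C : {set point n}) :
    {in C &, forall c c', c != c' -> (2 * t + 1 <= leeD n c c')%N} ->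
  {in C &, forall c c' p, p \in ball n t c -> p \in ball n t c' -> c = c'}.
Proof.
move=> sepC c c' cC c'C p; rewrite !inE => pc pc'.
apply/eqP; apply: contraTT (leeD_triangle n_gt1 c p c') => /(sepC _ _ cC c'C).
by rewrite (leeDC n_gt1 c p); lia.
Qed.

Lemma transl_tiling (C : {set point n}) (x : point n) :
  t_perfect_code C t -> lee_tiling t (transl x C).
Proof.
case=> d [[_ dC] le_d _ coverC]; split.
  move=> p; have [c cC pc] := coverC (p.1 - x.1, p.2 - x.2).
  exists (x.1 + c.1, x.2 + c.2); first exact: imset_f.
  move: pc; rewrite !inE -(leeD_transl x (p.1 - x.1, p.2 - x.2)) /=.
  by rewrite !subrKC -surjective_pairing.
apply: ball_unique => _ _ /imsetP[c cC ->] /imsetP[c' c'C ->] neq.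
rewrite leeD_transl; apply: leq_trans le_d (dC _ _ cC c'C _).
by apply: contraNneq neq => ->.
Qed.

Lemma palette_ball (C : {set point n}) p c :
  lee_tiling t C -> c \in C -> p \in ball n t c -> palette t C p = Some c.
Proof.
move=> [_ uniqC] cC pc; rewrite /palette.
case: pickP => [c' /andP[c'C pc'] | noC]; first by rewrite (uniqC c' c c'C cC p).
by move: (noC c); rewrite cC pc.
Qed.

Lemma orthogonal_palette_comp (C : {set point n}) (phi : point n -> point n)
    (S S' : grid n) :
    lee_tiling t C -> injective phi -> {in C, forall c, phi c \in C} ->
    (forall p q, leeD n (phi p) (phi q) = leeD n p q) ->
    (forall p, S' p = S (phi p)) ->
  Defs.orthogonal (fun p => S p) (palette t C) ->
  Defs.orthogonal (fun p => S' p) (palette t C).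
Proof.
move=> tileC inj_phi phiC isom_phi S'E orthS p q /=.
have [coverC _] := tileC; have [c cC pc] := coverC p; have [c' c'C qc'] := coverC q.
have phi_ball r c'' : c'' \in C -> r \in ball n t c'' ->
    palette t C (phi r) = Some (phi c'').
  move=> c''C rc''; apply: palette_ball tileC (phiC _ c''C) _.
  by move: rc''; rewrite !inE isom_phi.
rewrite !S'E (palette_ball tileC cC pc) (palette_ball tileC c'C qc') => -[eS ecc'].
apply: inj_phi; apply: orthS; rewrite /= eS.
by rewrite (phi_ball _ _ cC pc) (phi_ball _ _ c'C qc') ecc'.
Qed.

End Tiling.

Section CyclicCodeRotation.
Variables (n : nat) (C0 : {set point n}) (a b : 'Z_n).
Hypotheses (linC0 : linear_code C0) (genC0 : gen_row C0 a b).

Lemma linear_code_cyclic (w : point n) :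
  w \in C0 -> injective (fun k : 'Z_n => (k * w.1, k * w.2)) ->
  C0 = [set (k * w.1, k * w.2) | k : 'Z_n].
Proof.
move=> wC inj_w; have [_ _ scaleC] := linC0.
apply/esym/eqP; rewrite eqEcard; apply/andP; split.
  by apply/subsetP => _ /imsetP[k _ ->]; apply: scaleC.
by rewrite card_imset //; case: genC0 => -> _; apply: leq_imset_card.
Qed.

Lemma linear_code_rot_closed (T e : 'Z_n) :
    e * e = 1 -> 2 * T ^+ 2 + 2 * T + 1 = 0 -> (T, e * (1 + T)) \in C0 ->
  {in C0, forall c, (- c.2, c.1) \in C0}.
Proof.
move=> ee1 normT wC.
have inj_w : injective (fun k => (k * T, k * (e * (1 + T)))).
  move=> k k' /= /pair_equal_spec[kT k1T].
  have kE (l : 'Z_n) : l = e * (l * (e * (1 + T))) - l * T by ring: ee1.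
  by rewrite (kE k) (kE k') kT k1T.
(* Modulo 2T^2 + 2T + 1 = 0, multiplication by m maps w to its rotation. *)
pose m := e * (2 * T + 1).
have rotE (k : 'Z_n) :
    (- (k * (e * (1 + T))), k * T) = (k * m * T, k * m * (e * (1 + T))).
  congr pair; apply: subr0_eq.
    by rewrite -(mulr0 (- (k * e))) -normT /m; ring.
  by rewrite -(mulr0 (- k)) -normT /m; ring: ee1.
rewrite (linear_code_cyclic wC inj_w) => _ /imsetP[k _ ->].
by apply/imsetP; exists (k * m); last exact: rotE.
Qed.

End CyclicCodeRotation.

Section CoveringCodewords.
Variables (t n : nat) (C0 : {set point n}).
Hypotheses (t_gt0 : (0 < t)%N) (nE : n = (2 * t ^ 2 + 2 * t + 1)%N).
Hypotheses (C0_0 : (0, 0) \in C0)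
  (sepC0 : {in C0 &, forall c c', c != c' -> (2 * t + 1 <= leeD n c c')%N})
  (coverC0 : forall p : point n, exists2 c, c \in C0 & p \in ball n t c).

Let n_gt1 : (1 < n)%N. Proof. by rewrite nE; lia. Qed.
Let n_gt_2t2 : (2 * t + 2 < n)%N. Proof. by rewrite nE; nia. Qed.

Lemma codeword_covering_t_unit (s : int) (c : point n) :
    `|s|%N = 1%N -> c \in C0 -> (leeD n ((t%:Z)%:~R, s%:~R) c <= t)%N ->
  exists U W : int, [/\ c = ((t%:Z - U)%:~R, (s - W)%:~R), (`|U| + `|W| <= t)%N
                      & (2 * t + 1 <= `|t%:Z - U| + `|s - W|)%N].
Proof.
move=> s1 cC0 near_c.
have [U eU lU] := leeZ_attained n_gt1 ((t%:Z)%:~R - c.1).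
have [W eW lW] := leeZ_attained n_gt1 (s%:~R - c.2).
have c1E : c.1 = (t%:Z - U)%:~R by rewrite intrB -eU; ring.
have c2E : c.2 = (s - W)%:~R by rewrite intrB -eW; ring.
have UW_le : (`|U| + `|W| <= t)%N by move: near_c; rewrite /leeD /leeW /= lU lW.
exists U, W; split => //; first by rewrite -c1E -c2E -surjective_pairing.
(* (t, s) is at distance t + 1 from 0, so c <> 0 and c has weight >= 2t + 1. *)
have c_neq0 : c != (0, 0).
  apply/eqP => c0; move: c1E c2E; rewrite c0 /=.
  by move=> /esym/(intr_Zn_eq0 n_gt1) tU /esym/(intr_Zn_eq0 n_gt1) sW; lia.
have := sepC0 cC0 C0_0 c_neq0; rewrite /leeD /leeW /= !subr0 c1E c2E.
by have := leeZ_intr n_gt1 (t%:Z - U); have := leeZ_intr n_gt1 (s - W); lia.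
Qed.

Lemma codeword_t_pm_tS :
  ((t%:Z)%:~R, (1 + t%:Z)%:~R) \in C0 \/ ((t%:Z)%:~R, (-1 - t%:Z)%:~R) \in C0.
Proof.
have [c1 c1C near1] := coverC0 ((t%:Z)%:~R, 1%:~R).
have [c2 c2C near2] := coverC0 ((t%:Z)%:~R, (-1)%:~R).
move: near1 near2; rewrite !inE => near1 near2.
have [U1 [W1 [c1E UW1 far1]]] := codeword_covering_t_unit (s := 1) (erefl _) c1C near1.
have [U2 [W2 [c2E UW2 far2]]] := codeword_covering_t_unit (s := -1) (erefl _) c2C near2.
have [c12 | c12] := eqVneq c1 c2.
  have /eqP := congr1 snd c12; rewrite c1E c2E -subr_eq0 -intrB => /eqP.
  by move/(intr_Zn_eq0 n_gt1); lia.
have := sepC0 c1C c2C c12; rewrite /leeD /leeW c1E c2E /= -!intrB => far12.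
have {}far12 := leq_trans far12 (leq_add (leeZ_intr n_gt1 _) (leeZ_intr n_gt1 _)).
(* Both codewords then lie on the boundary of the balls around (t, 1) and
   (t, -1); being 2t + 1 apart forces one of them to be (t, +-(t + 1)). *)
have [[U10 W1E] | [U20 W2E]] : (U1 = 0 /\ W1 = - t%:Z) \/ (U2 = 0 /\ W2 = t%:Z) by lia.
  by left; move: c1C; rewrite c1E U10 W1E subr0 opprK.
by right; move: c2C; rewrite c2E U20 W2E subr0.
Qed.

End CoveringCodewords.

Lemma perfect_code_rot_closed (t n : nat) (C0 : {set point n}) (a b : 'Z_n) :
    (0 < t)%N -> n = (2 * t ^ 2 + 2 * t + 1)%N ->
    linear_code C0 -> gen_row C0 a b -> t_perfect_code C0 t ->
  {in C0, forall c, (- c.2, c.1) \in C0}.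
Proof.
move=> t_gt0 nE linC0 genC0 [d [[_ distC0] le_d _ coverC0]].
have [C0_0 _ _] := linC0.
have sepC0 c c' : c \in C0 -> c' \in C0 -> c != c' -> (2 * t + 1 <= leeD n c c')%N.
  by move=> cC c'C neq; apply: leq_trans le_d (distC0 c c' cC c'C neq).
have normT : 2 * t%:R ^+ 2 + 2 * t%:R + 1 = 0 :> 'Z_n.
  have : (2 * t ^ 2 + 2 * t + 1)%:R = 0 :> 'Z_n by rewrite -nE pchar_Zp // nE; lia.
  by rewrite !(natrD, natrM, natrX).
have intrT : ((t%:Z)%:~R : 'Z_n) = t%:R by rewrite -pmulrn.
have [wC0 | wC0] := codeword_t_pm_tS t_gt0 nE C0_0 sepC0 coverC0.
  apply: (linear_code_rot_closed linC0 genC0 (e := 1) (mulr1 1) normT).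
  by rewrite mul1r; move: wC0; rewrite intrD intrT.
apply: (linear_code_rot_closed linC0 genC0 (e := -1) _ normT); first by rewrite mulrNN mulr1.
by rewrite mulN1r opprD; move: wC0; rewrite intrB intrT.
Qed.

Lemma tau1P_expE n m (A : grid n) :
  (tau1P n ^+ m)%g A = [ffun p => A (p.1 - m%:R, p.2)].
Proof.
elim: m => [|m IHm]; apply/ffunP => -[i j]; rewrite ffunE.
  by rewrite expg0 perm1 subr0.
by rewrite expgSr permM IHm permE !ffunE /= mulrS opprD addrA.
Qed.

Lemma tau2P_expE n m (A : grid n) :
  (tau2P n ^+ m)%g A = [ffun p => A (p.1, p.2 - m%:R)].
Proof.
elim: m => [|m IHm]; apply/ffunP => -[i j]; rewrite ffunE.
  by rewrite expg0 perm1 subr0.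
by rewrite expgSr permM IHm permE !ffunE /= mulrS opprD addrA.
Qed.

Lemma latin_comp n (S S' : grid n) (f g : 'Z_n -> 'Z_n) :
    injective f -> injective g -> (forall p, S' p = S (f p.1, g p.2)) ->
  latin S -> latin S'.
Proof.
move=> inj_f inj_g S'E [rowS colS]; split.
  by move=> i j j'; rewrite !S'E => /rowS /inj_g.
by move=> j i i'; rewrite !S'E => /colS /inj_f.
Qed.

Lemma latin_comp_swap n (S S' : grid n) (f g : 'Z_n -> 'Z_n) :
    injective f -> injective g -> (forall p, S' p = S (f p.2, g p.1)) ->
  latin S -> latin S'.
Proof.
move=> inj_f inj_g S'E [rowS colS]; split.
  by move=> i j j'; rewrite !S'E => /colS /inj_f.
by move=> j i i'; rewrite !S'E => /rowS /inj_g.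
Qed.

Lemma perm_gen_closed (T : finType) (A : {set {perm T}}) (P : T -> Prop) :
  {in A, forall (g : {perm T}) s, P s -> P (g s)} ->
  {in <<A>>%g, forall (g : {perm T}) s, P s -> P (g s)}.
Proof.
move=> closedA g /gen_prodgP[k [c cA ->]].
elim: k c cA => [|k IHk] c cA s Ps; first by rewrite big_ord0 perm1.
by rewrite big_ord_recr permM; apply: closedA (cA _) _ (IHk _ _ _ _).
Qed.

Section GeneratorAction.
Variables (t n : nat) (C0 : {set point n}) (a b : 'Z_n) (x : point n).
Hypotheses (t_gt0 : (0 < t)%N) (nE : n = (2 * t ^ 2 + 2 * t + 1)%N).
Hypotheses (linC0 : linear_code C0) (genC0 : gen_row C0 a b).
Hypothesis perfC0 : t_perfect_code C0 t.

Let n_gt1 : (1 < n)%N. Proof. by rewrite nE; lia. Qed.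
Let tileC : lee_tiling t (transl x C0). Proof. exact: transl_tiling. Qed.

Lemma rot_generator_sudoku (S : grid n) :
  perfect_sudoku t (transl x C0) S ->
  perfect_sudoku t (transl x C0)
    ((rP n * tau1P n ^+ val (x.1 - x.2) * tau2P n ^+ val (x.1 + x.2 + 1))%g S).
Proof.
pose f j := x.1 + x.2 - j; pose g i := i - (x.1 - x.2).
have inj_f : injective f by move=> j j' /addrI /oppr_inj.
have inj_g : injective g by apply: addIr.
have SE p : ((rP n * tau1P n ^+ val (x.1 - x.2) * tau2P n ^+ val (x.1 + x.2 + 1))%g S) p
    = S (f p.2, g p.1).
  rewrite !permM tau2P_expE tau1P_expE /rP permE !ffunE !Zn_natr_val //.
  by congr (S (_, _)); rewrite /= /f /g; ring.
move=> [latS orthS]; split; first exact: latin_comp_swap SE latS.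
apply: (orthogonal_palette_comp tileC _ _ _ SE orthS).
- by move=> [i j] [i' j'] /= /pair_equal_spec[/inj_f -> /inj_g ->].
- move=> _ /imsetP[c cC0 ->]; apply/imsetP; exists (- c.2, c.1).
    exact: perfect_code_rot_closed t_gt0 nE linC0 genC0 perfC0 _ cC0.
  by rewrite /f /g /=; congr pair; ring.
- move=> p q; rewrite /leeD /leeW /= addnC -(leeZN n_gt1 (f p.2 - f q.2)).
  have -> : - (f p.2 - f q.2) = p.2 - q.2 by rewrite /f; ring.
  by have -> : g p.1 - g q.1 = p.1 - q.1 by rewrite /g; ring.
Qed.

Lemma shift_generator_sudoku (S : grid n) :
  perfect_sudoku t (transl x C0) S ->
  perfect_sudoku t (transl x C0) ((tau1P n ^+ val a * tau2P n ^+ val b)%g S).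
Proof.
have SE p : ((tau1P n ^+ val a * tau2P n ^+ val b)%g S) p = S (- a + p.1, - b + p.2).
  by rewrite permM tau2P_expE tau1P_expE !ffunE !Zn_natr_val // /= addrC [- b + _]addrC.
move=> [latS orthS]; split; first exact: latin_comp (addrI (- a)) (addrI (- b)) SE latS.
apply: (orthogonal_palette_comp tileC _ _ (leeD_transl (- a, - b)) SE orthS).
  by move=> [i j] [i' j'] /= /pair_equal_spec[/addrI -> /addrI ->].
have [_ addC0 scaleC0] := linC0.
have abC0 : (a, b) \in C0 by case: genC0 => -> _; apply/imsetP; exists 1; rewrite ?mul1r.
move=> _ /imsetP[c cC0 ->]; apply/imsetP; exists (c.1 + -1 * a, c.2 + -1 * b).
  exact: addC0 cC0 (scaleC0 (-1) _ abC0).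
by congr pair => /=; ring.
Qed.

End GeneratorAction.

Local Close Scope ring_scope.

Theorem mainTheorem2 (t n : nat) (ht : (1 <= t)%N) (hn : n = (2 * t ^ 2 + 2 * t + 1)%N)
  (C0 : {set point n}) (a b : 'Z_n)
  (hlin : linear_code C0) (hgen : gen_row C0 a b) (hperf : t_perfect_code C0 t)
  (x : point n) :
  forall (S : grid n) (g : {perm grid n}),
    perfect_sudoku t (transl x C0) S ->
    g \in GS x a b ->
    perfect_sudoku t (transl x C0) (g S).
Proof.
move=> S g sudS gGS; apply: perm_gen_closed gGS S sudS => h.
rewrite !inE => /orP[] /eqP -> S' sudS'.
  exact: (rot_generator_sudoku ht hn hlin hgen hperf).
exact: (shift_generator_sudoku ht hn hlin hgen hperf).
Qed.
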